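(* Consider two simple totally unimodular matrices $$A_1=\begin{pmatrix}B&0\\ b^t&1\end{pmatrix},\qquad A_2=\begin{pmatrix}c^t&1\\ C&0\end{pmatrix},$$ where $B\in M_{g_1,n_1}(\mathbb{Z})$, $C\in M_{g_2,n_2}(\mathbb{Z})$ and $b,c$ are integer vectors, and assume that $\overline{Q_i}$ is well-suited for $A_i$ for $i=1,2$. Then one can write $$\overline{Q_1}=\begin{pmatrix}Q_1&r_1\\ r_1^t&1\end{pmatrix},\qquad \overline{Q_2}=\begin{pmatrix}1&r_2^t\\ r_2&Q_2\end{pmatrix}$$ with $Q_i\in M_{g_i,g_i}(\mathbb{R})$ and $r_i\in\mathbb{R}^{g_i}$, and $$\overline{Q}:=\begin{pmatrix}Q_1&r_1&r_1r_2^t\\ r_1^t&1&r_2^t\\ r_2r_1^t&r_2&Q_2\end{pmatrix}\ \text{ is well-suited for }\ A=\begin{pmatrix}B&0&0\\ b^t&c^t&1\\ 0&C&0\end{pmatrix}.$$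
   Context: A real matrix is totally unimodular if every square submatrix has determinant $-1,0$ or $1$; it is simple if it has no zero column and no two proportional columns. For a simple totally unimodular $A\in M_{g,n}(\mathbb{Z})$, a symmetric matrix $Q\in M_{g,g}(\mathbb{R})$ is well-suited for $A$ if $Q$ is positive definite and for every $\xi\in\mathbb{Z}^g\setminus\{0\}$ one has $\xi^tQ\xi\ge1$, with equality if and only if $\xi$ or $-\xi$ is a column vector of $A$. *)

From HB Require Import structures.
From mathcomp Require Import all_boot all_order all_algebra.
From mathcomp Require Import reals.
Set Implicit Arguments. Unset Strict Implicit. Unset Printing Implicit Defensive.
Import Order.TTheory GRing.Theory Num.Theory.
Local Open Scope ring_scope.

Definition totally_unimodular (g n : nat) (A : 'M[int]_(g, n)) : Prop :=
  forall (k : nat) (f : 'I_k -> 'I_g) (h : 'I_k -> 'I_n),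
    injective f -> injective h -> \det (mxsub f h A) \in [:: -1; 0; 1].

Definition simple_mx (g n : nat) (A : 'M[int]_(g, n)) : Prop :=
  (forall j : 'I_n, col j A != 0) /\
  (forall i j : 'I_n, i != j ->
     ~ exists lam : rat,
         map_mx (fun z : int => z%:~R : rat) (col i A)
         = lam *: map_mx (fun z : int => z%:~R : rat) (col j A)).

Definition qform (R : realType) (g : nat) (Q : 'M[R]_g) (x : 'cV[R]_g) : R :=
  (x^T *m Q *m x) 0 0.

Definition int_to_real (R : realType) (g : nat) (xi : 'cV[int]_g) : 'cV[R]_g :=
  map_mx (fun z : int => z%:~R) xi.

Definition well_suited (R : realType) (g n : nat) (Q : 'M[R]_g) (A : 'M[int]_(g, n)) : Prop :=
  Q^T = Q /\
  (forall x : 'cV[R]_g, x != 0 -> 0 < qform Q x) /\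
  (forall xi : 'cV[int]_g, xi != 0 ->
     1 <= qform Q (int_to_real R xi) /\
     (qform Q (int_to_real R xi) = 1 <->
        exists j : 'I_n, xi = col j A \/ - xi = col j A)).

From HB Require Import structures.
From mathcomp Require Import all_boot all_order all_algebra.
From mathcomp Require Import reals.
From mathcomp Require Import lra.
Import Order.TTheory GRing.Theory Num.Theory.
Set Implicit Arguments. Unset Strict Implicit. Unset Printing Implicit Defensive.
Local Open Scope ring_scope.

(* With S_i := Q_i - r_i r_i^T, the three forms decompose as
     Qb1 (x, t)       = S1[x] + (r1.x + t)^2,
     Qb2 (t, x)       = S2[x] + (r2.x + t)^2,
     Qbar (x1, t, x2) = S1[x1] + S2[x2] + (r1.x1 + t + r2.x2)^2.
   So Qbar restricts to Qb1 on vectors with x2 = 0 and to Qb2 on vectors with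
   x1 = 0, exactly as the columns of A restrict to those of A1 and A2.
   Killing the square shows that S_i is positive definite, and choosing an
   integer t with |r_i.x + t| <= 1/2 gives S_i[xi] >= 3/4 on nonzero integer
   vectors; hence Qbar >= 3/2 > 1 when both x1 and x2 are nonzero integer vectors,
   while no column of A has both parts nonzero.  The corner entries of Qb1
   and Qb2 equal 1 because the last columns of A1 and A2 are unit vectors. *)

Section QuadraticForms.
Variable R : realType.
Implicit Types m n g : nat.

Definition dot n (u v : 'cV[R]_n) : R := (u^T *m v) 0 0.

Definition schur_compl g (Q : 'M[R]_g) (r : 'cV[R]_g) : 'M[R]_g := Q - r *m r^T.

Lemma mulmx11E (X Y : 'M[R]_1) : (X *m Y) 0 0 = X 0 0 * Y 0 0.
Proof. by rewrite mxE big_ord1. Qed.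

Lemma dotC n (u v : 'cV[R]_n) : dot u v = dot v u.
Proof. by rewrite /dot -(trmxK (v^T *m u)) trmx_mul trmxK [in RHS]mxE. Qed.

Lemma dot_col_mx m n (u1 v1 : 'cV[R]_m) (u2 v2 : 'cV[R]_n) :
  dot (col_mx u1 u2) (col_mx v1 v2) = dot u1 v1 + dot u2 v2.
Proof. by rewrite /dot tr_col_mx mul_row_col mxE. Qed.

Lemma dot0r n (u : 'cV[R]_n) : dot u 0 = 0.
Proof. by rewrite /dot mulmx0 mxE. Qed.

Lemma qformx0 n (Q : 'M[R]_n) : qform Q 0 = 0.
Proof. by rewrite /qform mulmx0 mxE. Qed.

Lemma dot1 (t : 'cV[R]_1) : dot 1 t = t 0 0.
Proof. by rewrite /dot trmx1 mul1mx. Qed.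

Lemma qformD n (Q Q' : 'M[R]_n) x : qform (Q + Q') x = qform Q x + qform Q' x.
Proof. by rewrite /qform mulmxDr mulmxDl mxE. Qed.

Lemma qform0 n (x : 'cV[R]_n) : qform 0 x = 0.
Proof. by rewrite /qform mulmx0 mul0mx mxE. Qed.

Lemma qform_rank1 n (w x : 'cV[R]_n) : qform (w *m w^T) x = dot w x ^+ 2.
Proof. by rewrite /qform mulmxA -mulmxA mulmx11E -/(dot x w) dotC. Qed.

Lemma qform_diag_mx m n (D1 : 'M[R]_m) (D2 : 'M[R]_n) x1 x2 :
  qform (block_mx D1 0 0 D2) (col_mx x1 x2) = qform D1 x1 + qform D2 x2.
Proof.
by rewrite /qform tr_col_mx mul_row_block !mulmx0 addr0 add0r mul_row_col mxE.
Qed.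

Lemma block_unit_lastE g (Q : 'M[R]_g) (r : 'cV[R]_g) :
  block_mx Q r r^T 1 =
  block_mx (schur_compl Q r) 0 0 0 + col_mx r 1 *m (col_mx r 1)^T.
Proof.
rewrite tr_col_mx trmx1 mul_col_row add_block_mx !mulmx1 mul1mx !add0r.
by rewrite /schur_compl subrK.
Qed.

Lemma block_unit_firstE g (Q : 'M[R]_g) (r : 'cV[R]_g) :
  block_mx 1 r^T r Q =
  block_mx 0 0 0 (schur_compl Q r) + col_mx 1 r *m (col_mx 1 r)^T.
Proof.
rewrite tr_col_mx trmx1 mul_col_row add_block_mx !mulmx1 mul1mx !add0r.
by rewrite /schur_compl subrK.
Qed.

Lemma qform_block_unit_last g (Q : 'M[R]_g) (r : 'cV[R]_g) x (t : 'cV[R]_1) :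
  qform (block_mx Q r r^T 1) (col_mx x t) =
  qform (schur_compl Q r) x + (dot r x + t 0 0) ^+ 2.
Proof.
by rewrite block_unit_lastE qformD qform_diag_mx qform0 addr0 qform_rank1 dot_col_mx dot1.
Qed.

Lemma qform_block_unit_first g (Q : 'M[R]_g) (r : 'cV[R]_g) (t : 'cV[R]_1) x :
  qform (block_mx 1 r^T r Q) (col_mx t x) =
  qform (schur_compl Q r) x + (dot r x + t 0 0) ^+ 2.
Proof.
rewrite block_unit_firstE qformD qform_diag_mx qform0 add0r qform_rank1 dot_col_mx.
by rewrite dot1 (addrC (t 0 0)).
Qed.

Lemma qform_col_mx0l m n (Q : 'M[R]_(m + n)) (v : 'cV[R]_n) :
  qform Q (col_mx 0 v) = qform (drsubmx Q) v.
Proof.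
rewrite -{1}(submxK Q) /qform tr_col_mx mul_row_block trmx0 !mul0mx !add0r.
by rewrite mul_row_col mulmx0 add0r.
Qed.

Lemma qform_col_mx0r m n (Q : 'M[R]_(m + n)) (u : 'cV[R]_m) :
  qform Q (col_mx u 0) = qform (ulsubmx Q) u.
Proof.
rewrite -{1}(submxK Q) /qform tr_col_mx mul_row_block trmx0 !mul0mx !addr0.
by rewrite mul_row_col mulmx0 addr0.
Qed.

Lemma qform_mx11 (Q : 'M[R]_1) : qform Q 1 = Q 0 0.
Proof. by rewrite /qform trmx1 mul1mx mulmx1. Qed.

Lemma sym_block_unit_last g (Qb : 'M[R]_(g + 1)) :
  Qb^T = Qb -> qform Qb (col_mx 0 1) = 1 ->
  Qb = block_mx (ulsubmx Qb) (ursubmx Qb) (ursubmx Qb)^T 1.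
Proof.
rewrite qform_col_mx0l qform_mx11 => S e.
have -> : (1 : 'M_1) = drsubmx Qb by rewrite [drsubmx Qb]mx11_scalar e.
by rewrite trmx_ursub S submxK.
Qed.

Lemma sym_block_unit_first g (Qb : 'M[R]_(1 + g)) :
  Qb^T = Qb -> qform Qb (col_mx 1 0) = 1 ->
  Qb = block_mx 1 (dlsubmx Qb)^T (dlsubmx Qb) (drsubmx Qb).
Proof.
rewrite qform_col_mx0r qform_mx11 => S e.
have -> : (1 : 'M_1) = ulsubmx Qb by rewrite [ulsubmx Qb]mx11_scalar e.
by rewrite trmx_dlsub S submxK.
Qed.

Definition pos_def n (Q : 'M[R]_n) := forall x, x != 0 -> 0 < qform Q x.

Definition int_qform_ge1 n (Q : 'M[R]_n) :=
  forall xi : 'cV[int]_n, xi != 0 -> 1 <= qform Q (int_to_real R xi).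

Lemma pos_def_qform_ge0 n (Q : 'M[R]_n) x : pos_def Q -> 0 <= qform Q x.
Proof. by move=> PD; have [->|/PD/ltW//] := eqVneq x 0; rewrite qformx0. Qed.

Lemma pos_def_schur_last g (Q : 'M[R]_g) (r : 'cV[R]_g) :
  pos_def (block_mx Q r r^T 1) -> pos_def (schur_compl Q r).
Proof.
move=> PD x nx; have := PD (col_mx x (- dot r x)%:M).
by rewrite col_mx_eq0 (negbTE nx) qform_block_unit_last mxE subrr expr0n addr0 => ->.
Qed.

Lemma pos_def_schur_first g (Q : 'M[R]_g) (r : 'cV[R]_g) :
  pos_def (block_mx 1 r^T r Q) -> pos_def (schur_compl Q r).
Proof.
move=> PD x nx; have := PD (col_mx (- dot r x)%:M x).
by rewrite col_mx_eq0 (negbTE nx) andbF qform_block_unit_first mxE subrr expr0n addr0 => ->.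
Qed.

(* Some integer [k] lies within [1/2] of [-a]. *)
Lemma sq_shift_bound (P a : R) :
  (forall k : int, 1 <= P + (a + k%:~R) ^+ 2) -> 3/4 <= P.
Proof.
move=> H; have := H (- Num.floor (a + 1/2)).
have /andP[lo hi] := floor_itv (a + 1/2).
rewrite intrD intrN in hi *; set m : R := (Num.floor _)%:~R in lo hi *.
have : (a - m) ^+ 2 <= 1/4 by rewrite expr2; nra.
lra.
Qed.

Lemma int_to_real_col m n (u : 'cV[int]_m) (v : 'cV[int]_n) :
  int_to_real R (col_mx u v) = col_mx (int_to_real R u) (int_to_real R v).
Proof. exact: map_col_mx. Qed.

Lemma int_to_real0 n : int_to_real R (0 : 'cV[int]_n) = 0.
Proof. by apply/matrixP => i j; rewrite !mxE. Qed.

Lemma int_to_real1 : int_to_real R (1 : 'cV[int]_1) = 1.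
Proof. by apply/matrixP => i j; rewrite !ord1 !mxE. Qed.

Lemma int_to_real_scalar (k : int) : int_to_real R k%:M = (k%:~R)%:M.
Proof. by apply/matrixP => i j; rewrite !ord1 !mxE /= !mulr1n. Qed.

Lemma int_qform_schur_last g (Q : 'M[R]_g) (r : 'cV[R]_g) xi :
  int_qform_ge1 (block_mx Q r r^T 1) -> xi != 0 ->
  3/4 <= qform (schur_compl Q r) (int_to_real R xi).
Proof.
move=> I nxi; apply: (sq_shift_bound (a := dot r (int_to_real R xi))) => k.
have := I (col_mx xi k%:M).
by rewrite col_mx_eq0 (negbTE nxi) int_to_real_col qform_block_unit_last
  int_to_real_scalar mxE => ->.
Qed.

Lemma int_qform_schur_first g (Q : 'M[R]_g) (r : 'cV[R]_g) xi :
  int_qform_ge1 (block_mx 1 r^T r Q) -> xi != 0 ->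
  3/4 <= qform (schur_compl Q r) (int_to_real R xi).
Proof.
move=> I nxi; apply: (sq_shift_bound (a := dot r (int_to_real R xi))) => k.
have := I (col_mx k%:M xi).
by rewrite col_mx_eq0 (negbTE nxi) andbF int_to_real_col qform_block_unit_first
  int_to_real_scalar mxE => ->.
Qed.

Lemma well_suited_col g n (Q : 'M[R]_g) (A : 'M[int]_(g, n)) j :
  simple_mx A -> well_suited Q A -> qform Q (int_to_real R (col j A)) = 1.
Proof. by move=> [nzA _] [_ [_ I]]; apply/(I _ (nzA j)).2; exists j; left. Qed.

Section Glue.
Variables (g1 g2 : nat) (Q1 : 'M[R]_g1) (r1 : 'cV[R]_g1) (Q2 : 'M[R]_g2) (r2 : 'cV[R]_g2).

Definition glue_mx : 'M[R]_(g1 + 1 + g2) :=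
  block_mx (block_mx Q1 r1 r1^T 1) (col_mx (r1 *m r2^T) r2^T)
           (row_mx (r2 *m r1^T) r2) Q2.

Lemma glue_mxE (w := col_mx (col_mx r1 1) r2) :
  glue_mx = block_mx (block_mx (schur_compl Q1 r1) 0 0 0) 0 0 (schur_compl Q2 r2)
            + w *m w^T.
Proof.
rewrite /w !tr_col_mx trmx1 !mul_col_row mul_col_mx mul_mx_row !add_block_mx.
by rewrite !add0r !mulmx1 !mul1mx /schur_compl !subrK.
Qed.

Lemma qform_glue_mx x1 (t : 'cV[R]_1) x2 :
  qform glue_mx (col_mx (col_mx x1 t) x2) =
  qform (schur_compl Q1 r1) x1 + qform (schur_compl Q2 r2) x2
  + (dot r1 x1 + t 0 0 + dot r2 x2) ^+ 2.
Proof.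
by rewrite glue_mxE qformD !qform_diag_mx qform0 addr0 qform_rank1 !dot_col_mx dot1.
Qed.

Lemma qform_glue_mx_lower y :
  qform glue_mx (col_mx y 0) = qform (block_mx Q1 r1 r1^T 1) y.
Proof.
rewrite -(vsubmxK y) qform_glue_mx qform_block_unit_last qformx0 dot0r.
by rewrite !addr0.
Qed.

Lemma qform_glue_mx_upper t x2 :
  qform glue_mx (col_mx (col_mx 0 t) x2) = qform (block_mx 1 r2^T r2 Q2) (col_mx t x2).
Proof.
by rewrite qform_glue_mx qform_block_unit_first qformx0 dot0r !add0r (addrC (t 0 0)).
Qed.

Lemma glue_mx_sym : Q1^T = Q1 -> Q2^T = Q2 -> glue_mx^T = glue_mx.
Proof.
move=> sQ1 sQ2; rewrite /glue_mx !tr_block_mx tr_col_mx tr_row_mx !trmx_mul !trmxK.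
by rewrite trmx1 sQ1 sQ2.
Qed.

Lemma glue_mx_pos_def :
  pos_def (block_mx Q1 r1 r1^T 1) -> pos_def (block_mx 1 r2^T r2 Q2) -> pos_def glue_mx.
Proof.
move=> PD1 PD2 x; rewrite -(vsubmxK x); move: (usubmx x) (dsubmx x) => y x2.
have [-> ny|nx2 _] := eqVneq x2 0.
  by rewrite qform_glue_mx_lower PD1 //; move: ny; rewrite col_mx_eq0 eqxx andbT.
rewrite -(vsubmxK y) qform_glue_mx; set d := (dot r1 _ + _ + _).
have S1 := pos_def_qform_ge0 (usubmx y) (pos_def_schur_last PD1).
have S2 := pos_def_schur_first PD2 nx2.
have := sqr_ge0 d; lra.
Qed.

Lemma glue_mx_int_gt1 x1 t x2 :
  int_qform_ge1 (block_mx Q1 r1 r1^T 1) -> int_qform_ge1 (block_mx 1 r2^T r2 Q2) ->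
  x1 != 0 -> x2 != 0 -> 1 < qform glue_mx (int_to_real R (col_mx (col_mx x1 t) x2)).
Proof.
move=> I1 I2 nx1 nx2; rewrite !int_to_real_col qform_glue_mx.
have := int_qform_schur_last I1 nx1; have := int_qform_schur_first I2 nx2.
set d := (dot r1 _ + _ + _); have := sqr_ge0 d; lra.
Qed.

End Glue.

End QuadraticForms.

Definition signed_col (T : zmodType) m n (M : 'M[T]_(m, n)) (x : 'cV[T]_m) :=
  exists j, x = col j M \/ - x = col j M.

Lemma pm_col_mx (T : zmodType) m n (x1 y1 : 'cV[T]_m) (x2 y2 : 'cV[T]_n) :
  col_mx x1 x2 = col_mx y1 y2 \/ - col_mx x1 x2 = col_mx y1 y2 <->
  (x1 = y1 /\ x2 = y2) \/ (- x1 = y1 /\ - x2 = y2).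
Proof.
by rewrite opp_col_mx; split=> [[] /eq_col_mx[-> ->]|[][-> ->]]; [left|right|left|right].
Qed.

Section Columns.
Variables (g1 n1 g2 n2 : nat) (B : 'M[int]_(g1, n1)) (b : 'cV[int]_n1)
  (C : 'M[int]_(g2, n2)) (c : 'cV[int]_n2).
Let A1 : 'M[int]_(g1 + 1, n1 + 1) := block_mx B 0 b^T 1.
Let A2 : 'M[int]_(1 + g2, n2 + 1) := block_mx c^T 1 C 0.
Let A : 'M[int]_(g1 + 1 + g2, n1 + n2 + 1) :=
  col_mx (col_mx (row_mx (row_mx B 0) 0) (row_mx (row_mx b^T c^T) 1))
         (row_mx (row_mx 0 C) 0).

Lemma col_A2_lshift j2 : col (lshift 1 j2) A2 = col_mx (col j2 c^T) (col j2 C).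
Proof. by rewrite /A2 block_mxEv col_col_mx !colKl. Qed.

Lemma col_A1_last : col (rshift n1 0) A1 = col_mx 0 1.
Proof.
rewrite /A1 block_mxEv col_col_mx !colKr col0.
by congr col_mx; apply/matrixP => i j; rewrite !ord1 !mxE.
Qed.

Lemma col_A2_last : col (rshift n2 0) A2 = col_mx 1 0.
Proof.
rewrite /A2 block_mxEv col_col_mx !colKr col0.
by congr col_mx; apply/matrixP => i j; rewrite !ord1 !mxE.
Qed.

Lemma col_A1_in_A j1 : exists j, col j A = col_mx (col j1 A1) 0.
Proof.
rewrite -[j1]splitK; case: (split j1) => [j|k] /=.
  by exists (lshift 1 (lshift n2 j)); rewrite /A /A1 block_mxEv !col_col_mx !colKl !col0.
by exists (rshift (n1 + n2) k); rewrite /A /A1 block_mxEv !col_col_mx !colKr !col0.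
Qed.

Lemma col_A2_in_A j2 t x2 :
  col j2 A2 = col_mx t x2 -> exists j, col j A = col_mx (col_mx 0 t) x2.
Proof.
rewrite -[j2]splitK; case: (split j2) => [j|k] /=.
  rewrite col_A2_lshift => /eq_col_mx[<- <-]; exists (lshift 1 (rshift n1 j)).
  by rewrite /A !col_col_mx !colKl !colKr !col0.
rewrite /A2 block_mxEv col_col_mx !colKr => /eq_col_mx[<- <-].
by exists (rshift (n1 + n2) k); rewrite /A !col_col_mx !colKr !col0.
Qed.

Lemma colA_cases j :
  (exists j1, col j A = col_mx (col j1 A1) 0) \/
  (exists j2, col j A = col_mx (col_mx 0 (col j2 c^T)) (col j2 C)).
Proof.
rewrite -[j]splitK; case: (split j) => [j'|k] /=; last first.
  by left; exists (rshift n1 k); rewrite /A /A1 block_mxEv !col_col_mx !colKr !col0.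
rewrite -[j']splitK; case: (split j') => [j1|j2] /=.
  by left; exists (lshift 1 j1); rewrite /A /A1 block_mxEv !col_col_mx !colKl !col0.
by right; exists j2; rewrite /A !col_col_mx !colKl !colKr !col0.
Qed.

(* A zero column of [C] would make the corresponding column of [A2]
   proportional to its last column. *)
Lemma simple_C_col_neq0 : simple_mx A2 -> forall j2, col j2 C != 0.
Proof.
move=> [_ nprop] j2; apply/negP => /eqP C0.
apply: (nprop (lshift 1 j2) (rshift n2 0)); first by rewrite eq_lrshift.
exists (c j2 0)%:~R; rewrite col_A2_lshift col_A2_last C0 !map_col_mx scale_col_mx.
congr col_mx; apply/matrixP => i k; rewrite !ord1 !mxE ?eqxx ?mulr1 ?mulr0 //.
Qed.

Lemma signed_col_lower y :
  (forall j2, col j2 C != 0) -> signed_col A (col_mx y 0) <-> signed_col A1 y.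
Proof.
move=> nzC; split=> [[j]|[j1 e]].
  have [[j1 ->]|[j2 ->]] := colA_cases j => /pm_col_mx.
    by case=> -[e _]; exists j1; [left|right].
  by case=> -[_ /esym/eqP]; rewrite ?oppr0 (negbTE (nzC j2)).
have [j ej] := col_A1_in_A j1; exists j; rewrite ej; apply/pm_col_mx; rewrite oppr0.
by case: e => <-; [left|right].
Qed.

Lemma signed_col_upper t x2 :
  x2 != 0 -> signed_col A (col_mx (col_mx 0 t) x2) <-> signed_col A2 (col_mx t x2).
Proof.
move=> nx2; split=> [[j]|[j2 e]].
  have [[j1 ->]|[j2 ->]] := colA_cases j => /pm_col_mx.
    by case=> -[_ /eqP]; rewrite ?oppr_eq0 (negbTE nx2).
  case=> -[e1 e2]; exists (lshift 1 j2); rewrite col_A2_lshift -e2; [left|right];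
    by move: e1; rewrite ?opp_col_mx => /eq_col_mx[_ <-]; rewrite ?opp_col_mx.
case: e => [e|]; last rewrite opp_col_mx => e.
  by have [j ej] := col_A2_in_A (esym e); exists j; left; rewrite ej.
by have [j ej] := col_A2_in_A (esym e); exists j; right; rewrite ej !opp_col_mx oppr0.
Qed.

Lemma signed_col_mixed x1 t x2 :
  x1 != 0 -> x2 != 0 -> ~ signed_col A (col_mx (col_mx x1 t) x2).
Proof.
move=> nx1 nx2 [j]; have [[j1 ->]|[j2 ->]] := colA_cases j => /pm_col_mx.
  by case=> -[_ /eqP]; rewrite ?oppr_eq0 (negbTE nx2).
by case=> -[+ _]; rewrite ?opp_col_mx => /eq_col_mx[/eqP]; rewrite ?oppr_eq0 (negbTE nx1).
Qed.

Variable R : realType.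

Lemma well_suited_block_last (Qb : 'M[R]_(g1 + 1)) :
  simple_mx A1 -> well_suited Qb A1 ->
  Qb = block_mx (ulsubmx Qb) (ursubmx Qb) (ursubmx Qb)^T 1.
Proof.
move=> sA1 wQ; apply: sym_block_unit_last; first by case: wQ.
by rewrite -(well_suited_col (rshift n1 0) sA1 wQ) col_A1_last int_to_real_col
  int_to_real0 int_to_real1.
Qed.

Lemma well_suited_block_first (Qb : 'M[R]_(1 + g2)) :
  simple_mx A2 -> well_suited Qb A2 ->
  Qb = block_mx 1 (dlsubmx Qb)^T (dlsubmx Qb) (drsubmx Qb).
Proof.
move=> sA2 wQ; apply: sym_block_unit_first; first by case: wQ.
by rewrite -(well_suited_col (rshift n2 0) sA2 wQ) col_A2_last int_to_real_col
  int_to_real0 int_to_real1.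
Qed.

Lemma well_suited_glue_mx Q1 (r1 : 'cV[R]_g1) Q2 (r2 : 'cV[R]_g2) :
  simple_mx A2 ->
  well_suited (block_mx Q1 r1 r1^T 1) A1 -> well_suited (block_mx 1 r2^T r2 Q2) A2 ->
  well_suited (glue_mx Q1 r1 Q2 r2) A.
Proof.
move=> sA2 [S1 [PD1 I1]] [S2 [PD2 I2]].
have I1ge1 : int_qform_ge1 (block_mx Q1 r1 r1^T 1) by move=> xi /I1[].
have I2ge1 : int_qform_ge1 (block_mx 1 r2^T r2 Q2) by move=> xi /I2[].
split.
  rewrite tr_block_mx in S1; rewrite tr_block_mx in S2.
  have [sQ1 _ _ _] := eq_block_mx S1; have [_ _ _ sQ2] := eq_block_mx S2.
  exact: glue_mx_sym.
split; first exact: glue_mx_pos_def.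
move=> xi; rewrite -(vsubmxK xi); move: (usubmx xi) (dsubmx xi) => y x2.
have [-> nxi | nx2 _] := eqVneq x2 0.
  have ny : y != 0 by apply: contraNneq nxi => ->; rewrite col_mx0.
  rewrite int_to_real_col int_to_real0 qform_glue_mx_lower.
  have [ge1 eq1] := I1 y ny; split=> //; apply: (iff_trans eq1).
  by apply: iff_sym; apply: signed_col_lower; apply: simple_C_col_neq0.
rewrite -(vsubmxK y); move: (usubmx y) (dsubmx y) => x1 t.
have [-> | nx1] := eqVneq x1 0.
  have ntx2 : col_mx t x2 != 0 by rewrite col_mx_eq0 negb_and nx2 orbT.
  rewrite !int_to_real_col int_to_real0 qform_glue_mx_upper -int_to_real_col.
  have [ge1 eq1] := I2 _ ntx2; split=> //; apply: (iff_trans eq1).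
  by apply: iff_sym; apply: signed_col_upper.
have gt1 := glue_mx_int_gt1 t I1ge1 I2ge1 nx1 nx2.
split; first exact: ltW.
split=> [e|/signed_col_mixed]; first by move: gt1; rewrite e ltxx.
by move/(_ nx1 nx2).
Qed.

End Columns.

Theorem lemma4p2p4 (R : realType) (g1 n1 g2 n2 : nat)
  (B : 'M[int]_(g1, n1)) (b : 'cV[int]_n1)
  (C : 'M[int]_(g2, n2)) (c : 'cV[int]_n2)
  (Qb1 : 'M[R]_(g1 + 1)) (Qb2 : 'M[R]_(1 + g2)) :
  let A1 : 'M[int]_(g1 + 1, n1 + 1) := block_mx B 0 b^T 1 in
  let A2 : 'M[int]_(1 + g2, n2 + 1) := block_mx c^T 1 C 0 in
  let A : 'M[int]_(g1 + 1 + g2, n1 + n2 + 1) :=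
    col_mx (col_mx (row_mx (row_mx B 0) 0) (row_mx (row_mx b^T c^T) 1))
           (row_mx (row_mx 0 C) 0) in
  simple_mx A1 -> totally_unimodular A1 ->
  simple_mx A2 -> totally_unimodular A2 ->
  well_suited Qb1 A1 -> well_suited Qb2 A2 ->
  exists (Q1 : 'M[R]_g1) (r1 : 'cV[R]_g1) (Q2 : 'M[R]_g2) (r2 : 'cV[R]_g2),
    Qb1 = block_mx Q1 r1 r1^T 1 /\
    Qb2 = block_mx 1 r2^T r2 Q2 /\
    well_suited
      (block_mx (block_mx Q1 r1 r1^T 1) (col_mx (r1 *m r2^T) r2^T)
                (row_mx (r2 *m r1^T) r2) Q2) A.
Proof.
move=> A1 A2 A sA1 _ sA2 _ wQ1 wQ2.
have e1 := well_suited_block_last sA1 wQ1.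
have e2 := well_suited_block_first sA2 wQ2.
exists (ulsubmx Qb1), (ursubmx Qb1), (drsubmx Qb2), (dlsubmx Qb2).
do 2!split=> //.
by apply: well_suited_glue_mx; rewrite // -?e1 -?e2.
Qed.
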